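(* Fix a realization of the satellite positions such that $\tilde{\mathbf J}$ is nonsingular, fix $\rho>0$, and suppose $\eta=\kappa W_e^2$ for a constant $\kappa>0$ independent of the effective bandwidth $W_e>0$. Then, as $W_e\to\infty$, $\|\mathbf J^{-1}-\tilde{\mathbf J}^{-1}\|=o(W_e^{-2})$; consequently $\mathrm{CRB}_{xy}-\widetilde{\mathrm{CRB}}_{xy}=o(W_e^{-2})$ and $\mathrm{CRB}_z-\widetilde{\mathrm{CRB}}_z=o(W_e^{-2})$.
   Context: With satellites indexed $i=1,\dots,N$, distances $D_i>0$ to the receiver, local zenith angles $\phi_{L,i}$, azimuths $\theta_i$, visibility indicators $\mathbf 1_i$ (visible iff $\phi_{L,i}\le\phi_{L,\max}$), set $L_i=2\eta\rho/D_i^2$, $K_i=\frac{2\rho}{D_i^4}(1+\eta D_i^2)$, $u_i=(\sin\phi_{L,i}\cos\theta_i,\sin\phi_{L,i}\sin\theta_i,\cos\phi_{L,i})^T$. The RSS+TDOA Fisher information matrix is $\mathbf J=\sum_i\mathbf 1_i\begin{pmatrix}K_iu_iu_i^T & L_iu_i\\ L_iu_i^T & L_i\end{pmatrix}$ and the TDOA-only one is $\tilde{\mathbf J}=\sum_i\mathbf 1_iL_i\begin{pmatrix}u_iu_i^T & u_i\\ u_i^T&1\end{pmatrix}$ (parameters ordered $x,y,z,T_0$). $\mathrm{CRB}_{xy}=[\mathbf J^{-1}]_{11}+[\mathbf J^{-1}]_{22}$, $\mathrm{CRB}_z=[\mathbf J^{-1}]_{33}$, and analogously with tildes for $\tilde{\mathbf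 J}$. $\|\cdot\|$ is any matrix norm. *)

From HB Require Import structures.
From mathcomp Require Import all_boot all_order all_algebra.
From mathcomp Require Import all_classical all_reals all_analysis.
Set Implicit Arguments. Unset Strict Implicit. Unset Printing Implicit Defensive.
Import Order.TTheory GRing.Theory Num.Theory.
Import numFieldNormedType.Exports.
Local Open Scope ring_scope.

Section Fisher.
Variables (R : realType) (N : nat).
Variables (D phiL theta : 'I_N -> R) (phiLmax rho eta : R).

Definition visible (i : 'I_N) : bool := phiL i <= phiLmax.
Definition Lc (i : 'I_N) : R := 2 * eta * rho / (D i) ^+ 2.
Definition Kc (i : 'I_N) : R := 2 * rho / (D i) ^+ 4 * (1 + eta * (D i) ^+ 2).
Definition uvec (i : 'I_N) : 'cV[R]_3 :=
  \col_(k < 3) [:: sin (phiL i) * cos (theta i);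
                   sin (phiL i) * sin (theta i);
                   cos (phiL i)]`_k.

(* RSS+TDOA FIM, parameters ordered (x, y, z, T0) *)
Definition FIM : 'M[R]_(3 + 1) :=
  \sum_(i < N | visible i)
     block_mx (Kc i *: (uvec i *m (uvec i)^T)) (Lc i *: uvec i)
              (Lc i *: (uvec i)^T) (Lc i)%:M.

Definition FIMt : 'M[R]_(3 + 1) :=
  \sum_(i < N | visible i)
     Lc i *: block_mx (uvec i *m (uvec i)^T) (uvec i) ((uvec i)^T) 1%:M.
End Fisher.

Definition CRBxy (R : realType) (J : 'M[R]_(3 + 1)) : R :=
  invmx J (inord 0) (inord 0) + invmx J (inord 1) (inord 1).
Definition CRBz (R : realType) (J : 'M[R]_(3 + 1)) : R :=
  invmx J (inord 2) (inord 2).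

Definition is_mxnorm (R : realType) (nm : 'M[R]_(3 + 1) -> R) : Prop :=
  [/\ forall A B, nm (A + B) <= nm A + nm B,
      forall (a : R) A, nm (a *: A) = `|a| * nm A
    & forall A, nm A = 0 -> A = 0].

Definition pinfty_filter_on (R : realType) : filter_on R :=
  FilterType (pinfty_nbhs R) (@proper_pinfty_nbhs R).

(* With eta = kappa W^2 the Fisher matrices decompose as
     FIMt(kappa W^2) = W^2 A      with A := FIMt(kappa) fixed and invertible,
     FIM(kappa W^2)  = W^2 A + E  with E := FIM(0), the RSS-only part,
   since the TDOA weights L_i are linear in eta and the RSS weights K_i are
   affine in eta with the same slope.  The whole theorem is therefore a
   statement about a fixed perturbation E of the growing matrix W^2 A:
   by the resolvent identity inv(B + E) - inv B = -inv(B + E) E inv B and a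
   Neumann-type argument in the (submultiplicative) entrywise l1 norm,
     |inv(W^2 A + E) - inv(W^2 A)|_1 <= 2 |E|_1 |inv A|_1^2 W^-4
   for W large.  Any matrix norm is dominated by a multiple of |.|_1, and
   every entry (hence every CRB difference) is dominated by |.|_1, so each
   quantity is O(W^-4), in particular o(W^-2). *)
From HB Require Import structures.
From mathcomp Require Import all_boot all_order all_algebra.
From mathcomp Require Import all_classical all_reals all_analysis.
From mathcomp Require Import ring lra.
Import Order.TTheory GRing.Theory Num.Theory.
Import numFieldNormedType.Exports.
Local Open Scope ring_scope.
Set Implicit Arguments. Unset Strict Implicit.

Section L1Norm.
Variables (R : realFieldType) (n : nat).
Local Notation M := 'M[R]_n.

Definition l1norm (X : M) : R := \sum_i \sum_j `|X i j|.

Lemma l1norm_ge0 (X : M) : 0 <= l1norm X.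
Proof. by apply: sumr_ge0 => i _; apply: sumr_ge0. Qed.

Lemma l1norm_entry (X : M) i j : `|X i j| <= l1norm X.
Proof.
rewrite /l1norm (bigD1 i) //= (bigD1 j) //= -addrA lerDl.
by apply: addr_ge0; apply: sumr_ge0 => // k _; apply: sumr_ge0.
Qed.

Lemma l1normD (X Y : M) : l1norm (X + Y) <= l1norm X + l1norm Y.
Proof.
rewrite /l1norm -big_split /=; apply: ler_sum => i _.
by rewrite -big_split /=; apply: ler_sum => j _; rewrite mxE ler_normD.
Qed.

Lemma l1normN (X : M) : l1norm (- X) = l1norm X.
Proof. by apply: eq_bigr => i _; apply: eq_bigr => j _; rewrite mxE normrN. Qed.

Lemma l1normZ (a : R) (X : M) : l1norm (a *: X) = `|a| * l1norm X.
Proof.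
rewrite /l1norm mulr_sumr; apply: eq_bigr => i _; rewrite mulr_sumr.
by apply: eq_bigr => j _; rewrite mxE normrM.
Qed.

Lemma l1normM (X Y : M) : l1norm (X *m Y) <= l1norm X * l1norm Y.
Proof.
rewrite /l1norm mulr_suml; apply: ler_sum => i _; rewrite mulr_suml.
apply: (@le_trans _ _ (\sum_j \sum_k `|X i k| * `|Y k j|)).
  apply: ler_sum => j _; rewrite mxE; apply: (le_trans (ler_norm_sum _ _ _)).
  by apply: ler_sum => k _; rewrite normrM.
rewrite exchange_big /=; apply: ler_sum => k _; rewrite -mulr_sumr.
apply: ler_wpM2l => //; rewrite [leRHS](bigD1 k) //= lerDl.
by apply: sumr_ge0 => l _; apply: sumr_ge0.
Qed.

(* Triple products are what the resolvent identity produces. *)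
Lemma l1normM3 (X Y Z : M) :
  l1norm (X *m Y *m Z) <= l1norm X * l1norm Y * l1norm Z.
Proof.
apply: (le_trans (l1normM _ _)); apply: ler_wpM2r; first exact: l1norm_ge0.
exact: l1normM.
Qed.

Lemma l1norm_eq0 (X : M) : l1norm X <= 0 -> X = 0.
Proof.
move=> X0; apply/matrixP => i j; rewrite mxE; apply/normr0_eq0.
by apply: le_anti; rewrite normr_ge0 andbT (le_trans (l1norm_entry X i j)).
Qed.

End L1Norm.

Section InversePerturbation.
Variables (R : realFieldType) (n : nat).
Local Notation M := 'M[R]_n.
Implicit Types A E : M.

Lemma invmxD_sub A E : A \in unitmx -> A + E \in unitmx ->
  invmx (A + E) - invmx A = - (invmx (A + E) *m E *m invmx A).
Proof.
move=> Au AEu; set X := invmx (A + E).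
have : X *m (A + E) *m invmx A = invmx A by rewrite mulVmx // mul1mx.
rewrite mulmxDr mulmxDl -(mulmxA X A) mulmxV // mulmx1 => XAE.
by rewrite -{1}XAE opprD addrA subrr add0r.
Qed.

Lemma unitmx_perturb A E : A \in unitmx ->
  l1norm (invmx A) * l1norm E < 1 -> A + E \in unitmx.
Proof.
move=> Au small; rewrite -row_free_unit -kermx_eq0; apply/eqP.
set K := kermx (A + E).
have KE : K *m A = - (K *m E) by apply/eqP; rewrite -addr_eq0 -mulmxDr mulmx_ker.
have Kfix : K = - (K *m E *m invmx A).
  by rewrite -mulNmx -KE -mulmxA mulmxV // mulmx1.
apply: l1norm_eq0.
have Kle : l1norm K <= l1norm K * (l1norm E * l1norm (invmx A)).
  by rewrite mulrA {1}Kfix l1normN l1normM3.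
have := l1norm_ge0 K; rewrite mulrC in small; nra.
Qed.

Lemma invmx_perturb A E : A \in unitmx ->
  l1norm (invmx A) * l1norm E <= 1 / 2 ->
  l1norm (invmx (A + E) - invmx A) <= 2 * l1norm E * l1norm (invmx A) ^+ 2.
Proof.
move=> Au small.
have AEu : A + E \in unitmx by apply: unitmx_perturb => //; lra.
have diff := invmxD_sub Au AEu; set X := invmx (A + E) in diff *.
have diff_le : l1norm (X - invmx A) <= l1norm X * l1norm E * l1norm (invmx A).
  by rewrite diff l1normN l1normM3.
have X_le : l1norm X <= l1norm (invmx A) + l1norm (X - invmx A).
  by rewrite -{1}(subrK (invmx A) X) addrC l1normD.
have x0 := l1norm_ge0 X; have d0 := l1norm_ge0 E; have c0 := l1norm_ge0 (invmx A).
have half : l1norm X * l1norm E * l1norm (invmx A) <= l1norm X / 2.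
  by rewrite -mulrA [_ * l1norm (invmx A)]mulrC ler_wpM2l // -div1r.
have X_le2 : l1norm X <= 2 * l1norm (invmx A) by lra.
apply: (le_trans diff_le).
have := ler_wpM2r (mulr_ge0 d0 c0) X_le2; rewrite expr2; nra.
Qed.

Lemma invmx_scaled_perturb A E (W : R) : A \in unitmx ->
  2 * l1norm (invmx A) * l1norm E + 1 < W ->
  l1norm (invmx (W ^+ 2 *: A + E) - invmx (W ^+ 2 *: A))
    <= 2 * l1norm E * l1norm (invmx A) ^+ 2 * W ^- 4.
Proof.
set c := l1norm (invmx A); set d := l1norm E => Au W_big.
have c0 : 0 <= c by exact: l1norm_ge0.
have d0 : 0 <= d by exact: l1norm_ge0.
have cd0 := mulr_ge0 c0 d0; rewrite -mulrA in W_big.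
have W1 : 1 < W by lra.
have W2 : 0 < W ^+ 2 by rewrite exprn_gt0 //; lra.
have WAu : W ^+ 2 *: A \in unitmx by rewrite unitmxZ ?unitfE ?gt_eqF.
have inv_norm : l1norm (invmx (W ^+ 2 *: A)) = W ^- 2 * c.
  by rewrite invmxZ ?unitfE ?gt_eqF // l1normZ ger0_norm // invr_ge0 ltW.
have small : l1norm (invmx (W ^+ 2 *: A)) * d <= 1 / 2.
  rewrite inv_norm -mulrA ler_pdivrMl // mul1r.
  have : W <= W ^+ 2 by rewrite expr2 ler_peMl //; lra.
  lra.
apply: (le_trans (invmx_perturb WAu small)); rewrite inv_norm.
by rewrite le_eqVlt; apply/orP; left; apply/eqP; rewrite /d; field; rewrite gt_eqF //; lra.
Qed.

End InversePerturbation.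

Section MatrixNorms.
Variable R : realType.
Local Notation M := 'M[R]_(3 + 1).

Lemma mxnorm0 (nm : M -> R) : is_mxnorm nm -> nm 0 = 0.
Proof. by case=> _ nmZ _; rewrite -(scale0r (0 : M)) nmZ normr0 mul0r. Qed.

Lemma mxnorm_ge0 (nm : M -> R) : is_mxnorm nm -> forall X, 0 <= nm X.
Proof.
move=> nmP X; have [nmD nmZ _] := nmP.
have := nmD X (- X); rewrite subrr mxnorm0 // -scaleN1r nmZ normrN normr1 mul1r.
lra.
Qed.

Lemma mxnorm_sum (nm : M -> R) (I : Type) (r : seq I) (F : I -> M) :
  is_mxnorm nm -> nm (\sum_(i <- r) F i) <= \sum_(i <- r) nm (F i).
Proof.
move=> nmP; have [nmD _ _] := nmP.
elim: r => [|a r IH]; first by rewrite !big_nil mxnorm0.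
by rewrite !big_cons; apply: (le_trans (nmD _ _)); apply: lerD.
Qed.

(* Every matrix norm is dominated by the l1 norm, with constant the sum of
   the norms of the elementary matrices (half of equivalence of norms). *)
Lemma mxnorm_le_l1 (nm : M -> R) : is_mxnorm nm ->
  exists2 C, 0 <= C & forall X, nm X <= C * l1norm X.
Proof.
move=> nmP; have [_ nmZ _] := nmP; have nm_ge0 := mxnorm_ge0 nmP.
exists (\sum_i \sum_j nm (delta_mx i j : M)).
  by apply: sumr_ge0 => i _; apply: sumr_ge0.
move=> X; rewrite {1}(matrix_sum_delta X) mulr_sumr.
apply: (le_trans (mxnorm_sum _ _ nmP)); apply: ler_sum => i _.
rewrite mulr_sumr; apply: (le_trans (mxnorm_sum _ _ nmP)); apply: ler_sum => j _.
rewrite nmZ mulrC ler_wpM2r // [leRHS](bigD1 i) //= [X in _ <= X + _](bigD1 j) //=.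
rewrite -addrA lerDl.
by apply: addr_ge0; apply: sumr_ge0 => // k _; apply: sumr_ge0.
Qed.

End MatrixNorms.

Lemma littleo_of_bound (R : realType) (f : R -> R) (C W0 : R) :
  1 <= W0 -> 0 <= C -> (forall W, W0 < W -> `|f W| <= C * W ^- 4) ->
  f =o_ (pinfty_filter_on R) (fun W : R => W ^- 2).
Proof.
move=> W01 C0 f_le; apply/eqoP => e e0.
have Ce : 0 <= C / e by exact: divr_ge0 (ltW e0).
exists (W0 + C / e); split; first by rewrite realE addr_ge0 //; lra.
move=> W W_big; have W0' : 0 < W by lra.
have W2 : 0 < W ^- 2 by rewrite invr_gt0 exprn_gt0.
apply: (le_trans (f_le W _)); first lra.
rewrite (_ : W ^- 4 = W ^- 2 * W ^- 2); last by rewrite -invfM -exprD.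
rewrite (ger0_norm (ltW W2)) mulrA ler_wpM2r ?(ltW W2) //.
rewrite ler_pdivrMr ?exprn_gt0 //.
have : C < e * W by rewrite mulrC -ltr_pdivrMr //; lra.
have : W <= W ^+ 2 by rewrite expr2 ler_peMl //; lra.
nra.
Qed.

Section FisherDecomposition.
Variables (R : realType) (N : nat) (D phiL theta : 'I_N -> R) (phiLmax rho : R).
Hypothesis D_gt0 : forall i, 0 < D i.

Lemma FIM_split (eta : R) :
  FIM D phiL theta phiLmax rho eta =
  FIMt D phiL theta phiLmax rho eta + FIM D phiL theta phiLmax rho 0.
Proof.
rewrite /FIM /FIMt -big_split /=; apply: eq_bigr => i _.
rewrite scale_block_mx add_block_mx /Kc /Lc !mul0r !mulr0 !mul0r !scale0r.
rewrite !addr0 scalemx1.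
have Di0 : D i != 0 by rewrite gt_eqF.
congr block_mx; apply/matrixP => a b; rewrite !mxE; last by rewrite mul0rn addr0.
by field; rewrite ?expf_neq0.
Qed.

End FisherDecomposition.

Lemma FIMt_scale (R : realType) (N : nat) (D phiL theta : 'I_N -> R)
  (phiLmax rho kappa W : R) :
  FIMt D phiL theta phiLmax rho (kappa * W ^+ 2) =
  W ^+ 2 *: FIMt D phiL theta phiLmax rho kappa.
Proof.
rewrite /FIMt scaler_sumr; apply: eq_bigr => i _; rewrite scalerA /Lc.
by congr (_ *: _); ring.
Qed.

Unset Implicit Arguments.
Theorem mainTheorem4 (R : realType) (N : nat)
  (D phiL theta : 'I_N -> R) (phiLmax rho kappa : R) :
  (forall i, 0 < D i) -> 0 < rho -> 0 < kappa ->
  (forall We : R, 0 < We ->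
     FIMt D phiL theta phiLmax rho (kappa * We ^+ 2) \in unitmx) ->
  (forall nm : 'M[R]_(3 + 1) -> R, is_mxnorm nm ->
     (fun We : R => nm (invmx (FIM D phiL theta phiLmax rho (kappa * We ^+ 2))
                        - invmx (FIMt D phiL theta phiLmax rho (kappa * We ^+ 2))))
       =o_ (pinfty_filter_on R) (fun We : R => We ^- 2))
  /\ (fun We : R => CRBxy (FIM D phiL theta phiLmax rho (kappa * We ^+ 2))
                    - CRBxy (FIMt D phiL theta phiLmax rho (kappa * We ^+ 2)))
       =o_ (pinfty_filter_on R) (fun We : R => We ^- 2)
  /\ (fun We : R => CRBz (FIM D phiL theta phiLmax rho (kappa * We ^+ 2))
                    - CRBz (FIMt D phiL theta phiLmax rho (kappa * We ^+ 2)))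
       =o_ (pinfty_filter_on R) (fun We : R => We ^- 2).
Proof.
move=> D_gt0 _ _ FIMt_unit.
set A := FIMt D phiL theta phiLmax rho kappa.
set E := FIM D phiL theta phiLmax rho 0.
have Au : A \in unitmx by have := FIMt_unit 1 ltr01; rewrite expr1n mulr1.
set C := 2 * l1norm E * l1norm (invmx A) ^+ 2.
have C0 : 0 <= C by rewrite /C !mulr_ge0 ?exprn_ge0 ?l1norm_ge0.
set W0 := 2 * l1norm (invmx A) * l1norm E + 1.
have W01 : 1 <= W0 by rewrite /W0 lerDr !mulr_ge0 ?l1norm_ge0.
set Delta := fun W : R => invmx (FIM D phiL theta phiLmax rho (kappa * W ^+ 2))
                        - invmx (FIMt D phiL theta phiLmax rho (kappa * W ^+ 2)).
have Delta_le W : W0 < W -> l1norm (Delta W) <= C * W ^- 4.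
  by move=> W_big; rewrite /Delta FIM_split // FIMt_scale invmx_scaled_perturb.
split; [|split].
- move=> nm nmP; have [K K0 nm_le] := mxnorm_le_l1 nmP.
  apply: (littleo_of_bound (C := K * C) W01); first exact: mulr_ge0.
  move=> W W_big; rewrite ger0_norm ?(mxnorm_ge0 nmP) // -mulrA.
  by rewrite (le_trans (nm_le _)) // ler_wpM2l // Delta_le.
- apply: (littleo_of_bound (C := 2 * C) W01); first exact: mulr_ge0.
  move=> W W_big.
  have -> : CRBxy (FIM D phiL theta phiLmax rho (kappa * W ^+ 2))
          - CRBxy (FIMt D phiL theta phiLmax rho (kappa * W ^+ 2))
          = Delta W (inord 0) (inord 0) + Delta W (inord 1) (inord 1).
    by rewrite /Delta /CRBxy !mxE; ring.
  have := l1norm_entry (Delta W) (inord 0) (inord 0).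
  have := l1norm_entry (Delta W) (inord 1) (inord 1).
  have := ler_normD (Delta W (inord 0) (inord 0)) (Delta W (inord 1) (inord 1)).
  have := Delta_le W W_big; lra.
- apply: (littleo_of_bound (C := C) W01 C0) => W W_big.
  have -> : CRBz (FIM D phiL theta phiLmax rho (kappa * W ^+ 2))
          - CRBz (FIMt D phiL theta phiLmax rho (kappa * W ^+ 2))
          = Delta W (inord 2) (inord 2) by rewrite /Delta /CRBz !mxE.
  exact: le_trans (l1norm_entry _ _ _) (Delta_le W W_big).
Qed.
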